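(* Let $\lambda=(\lambda_1,\dots,\lambda_n)\in\mathbb{R}^n$. (i) Let $Q=(I_1,\dots,I_r)$ be a block for $\lambda$. If $Q$ is positive, then $s_{I_1}(\lambda)+\dots+s_{I_i}(\lambda)>0$ for all $i\in\{1,\dots,r\}$; if $Q$ is negative, then $s_{I_i}(\lambda)+\dots+s_{I_r}(\lambda)\le0$ for all $i\in\{1,\dots,r\}$. (ii) Let $P\in\mathcal{P}_{ord}(n)$, $P=Q_1\cdots Q_k$ a block decomposition of $P$, and $l\in\{1,\dots,k-1\}$. Suppose $P\in\mathcal{P}_{ord}(\lambda)$ and that $Q_l$ is negative or $Q_{l+1}$ is positive. Then $P':=Q_1\cdots Q_{l-1}Q_{l+1}Q_lQ_{l+2}\cdots Q_k\in\mathcal{P}_{ord}(\lambda)$, $|P'|=|P|$ and $\varepsilon(P')=(-1)^{n_ln_{l+1}}\varepsilon(P)$, where $n_l,n_{l+1}$ are the sizes of $Q_l,Q_{l+1}$. Assume now in addition that $\lambda_1+\dots+\lambda_n>0$ and $N(\lambda)=n$. (iii) Let $P=(I_1,\dots,I_r)\in\mathcal{P}_{ord}(\lambda)$, $k\in\{1,\dots,r\}$ and $i_1<\dots<i_k$ in $\{1,\dots,r\}$. Then there is a unique block decomposition $P=Q_1\cdots Q_k$ such that $I_{i_l}$ is a center of $Q_l$ for every $l\in\{1,\dots,k\}$. Moreover $Q_1$ is positive and, if $k\ge2$, $Q_k$ is negative. (iv) Let $P=(I_1,\dots,I_r)\in\mathcal{P}_{ord}(\lambda)$ and $P=Q_1\cdots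 Q_k$ a block decomposition of $P$. Then there is a unique $s\in\{1,\dots,r\}$ such that $P':=(I_s,\dots,I_r,I_1,\dots,I_{s-1})\in\mathcal{P}_{ord}(\lambda)$, and $P'$ is of the form $Q_l\cdots Q_kQ_1\cdots Q_{l-1}$ for a uniquely determined $l\in\{1,\dots,k\}$.
   Context: $s_J(\lambda)=\sum_{i\in J}\lambda_i$. $\delta(\lambda)$ is the minimum of $s_J(\lambda)/|J|$ over subsets $J$ with $s_J(\lambda)>0$; $N(\lambda)$ is the minimum of $|J|$ over subsets with $s_J(\lambda)/|J|=\delta(\lambda)$. $\mathcal{P}_{ord}(n)$: ordered partitions $P=(I_1,\dots,I_k)$ of $\{1,\dots,n\}$ into nonempty blocks, $|P|=k$; $\mathcal{P}_{ord}(\lambda)$: those with $s_{I_1}(\lambda)+\dots+s_{I_i}(\lambda)>0$ for all $i$. $\varepsilon(P)=\mathrm{sgn}(\sigma_P)$ with $\sigma_P$ the unique permutation such that $\sigma_P^{-1}$ maps $\{n_1+\dots+n_i+1,\dots,n_1+\dots+n_{i+1}\}$ increasingly onto $I_{i+1}$ ($n_i=|I_i|$). Blocks: an ordered partition $Q=(I_1,\dots,I_r)$ of a subset $I\subset\{1,\dots,n\}$ (its support; its size is $|I|$) is a block with center $I_k$ ($k\in\{1,\dots,r\}$) if $s_{I_1}(\lambda)+\dots+s_{I_i}(\lambda)>0$ for all $i\in\{1,\dots,k-1\}$ and $s_{I_j}(\lambda)+\dots+s_{I_r}(\lambda)\le0$ for all $j\in\{k+1,\dots,r\}$; $Q$ is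 a block if it is a block with some center; it is positive if $s_I(\lambda)>0$ and negative otherwise. A block decomposition of $P\in\mathcal{P}_{ord}(n)$ is a sequence of blocks $Q_1,\dots,Q_k$, $Q_l=(I^l_1,\dots,I^l_{r_l})$, with $P=(I^1_1,\dots,I^1_{r_1},\dots,I^k_1,\dots,I^k_{r_k})$, written $P=Q_1\cdots Q_k$. *)

(* Indices {1,...,n} are rendered as 'I_n (0-based). *)
From HB Require Import structures.
From mathcomp Require Import all_boot all_order all_fingroup all_algebra.
Set Implicit Arguments. Unset Strict Implicit. Unset Printing Implicit Defensive.
Import Order.TTheory GRing.Theory Num.Theory.
Local Open Scope ring_scope.

Section Defs.
Variables (R : realFieldType) (n : nat) (lam : 'I_n -> R).

Definition sJ (J : {set 'I_n}) : R := \sum_(i in J) lam i.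

Definition ssum (Q : seq {set 'I_n}) : R := \sum_(I <- Q) sJ I.

(* delta(lambda): min of s_J/|J| over J with s_J > 0 (the default value is
   irrelevant whenever some J has s_J > 0, e.g. when s_{[n]} > 0) *)
Definition delta : R :=
  \big[Order.min/(sJ setT / n%:R)]_(J : {set 'I_n} | 0 < sJ J) (sJ J / #|J|%:R).

Definition Nlam : nat :=
  \big[minn/n]_(J : {set 'I_n} | (0 < sJ J) && (sJ J / #|J|%:R == delta)) #|J|.

Definition supp (Q : seq {set 'I_n}) : {set 'I_n} := \bigcup_(I <- Q) I.
End Defs.

Section Defs2.
Variables (n : nat).

Definition opart (Q : seq {set 'I_n}) : Prop :=
  (forall I, I \in Q -> I != set0) /\
  (forall i j, (i < j < size Q)%N -> [disjoint nth set0 Q i & nth set0 Q j]).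

Definition Pord (P : seq {set 'I_n}) : Prop := opart P /\ supp P = setT.

(* epsilon(P) = sgn(sigma_P), where sigma_P^{-1} sends the positions
   n_1+..+n_i+1 .. n_1+..+n_{i+1} increasingly onto I_{i+1}; i.e.
   sigma_P^{-1} p = nth p w p with w the concatenation of the increasingly
   enumerated blocks.  sgn(sigma_P) = sgn(sigma_P^{-1}). *)
Definition eps (R : realFieldType) (P : seq {set 'I_n}) : R :=
  let w := flatten (map (fun B : {set 'I_n} => enum B) P) in
  match [pick s : {perm 'I_n} | [forall p, s p == nth p w p]] with
  | Some s => (-1) ^+ (odd_perm s)
  | None => 0
  end.
End Defs2.

Section Defs3.
Variables (R : realFieldType) (n : nat) (lam : 'I_n -> R).

Definition Pord_lam (P : seq {set 'I_n}) : Prop :=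
  Pord P /\ (forall i, (1 <= i <= size P)%N -> 0 < ssum lam (take i P)).

Definition center_pos (Q : seq {set 'I_n}) (c : nat) : Prop :=
  (c < size Q)%N /\
  (forall j, (1 <= j <= c)%N -> 0 < ssum lam (take j Q)) /\
  (forall j, (c < j < size Q)%N -> ssum lam (drop j Q) <= 0).

Definition is_center (Q : seq {set 'I_n}) (C : {set 'I_n}) : Prop :=
  opart Q /\ exists c, nth set0 Q c = C /\ center_pos Q c.

Definition is_block (Q : seq {set 'I_n}) : Prop :=
  opart Q /\ exists c, center_pos Q c.

Definition positive (Q : seq {set 'I_n}) : Prop := 0 < sJ lam (supp Q).
Definition negative (Q : seq {set 'I_n}) : Prop := ~ positive Q.

Definition block_decomp (P : seq {set 'I_n}) (Qs : seq (seq {set 'I_n})) : Prop :=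
  (forall Q, Q \in Qs -> is_block Q) /\ P = flatten Qs.
End Defs3.

From Pilot Require Import Defs.
From HB Require Import structures.
From mathcomp Require Import all_boot all_order all_fingroup all_algebra.
From mathcomp Require Import zify lra.
Set Implicit Arguments. Unset Strict Implicit. Unset Printing Implicit Defensive.
Import Order.TTheory GRing.Theory Num.Theory.
Local Open Scope ring_scope.

(* A positive block has all its prefix
   sums positive and a negative block all its suffix sums nonpositive, so
   exchanging two adjacent blocks with Q_l negative or Q_(l+1) positive keeps
   every prefix sum of the partition positive; the word listing the blocks
   undergoes n_l n_(l+1) adjacent transpositions, whence the sign.
   If N(lambda) = n, the only set realising delta(lambda) is [n], so every set
   J with s_J > 0 has s_J >= s_[n]; in a partition of P_ord(lambda) every proper
   suffix therefore has sum <= 0.  Consequently the boundary between the blocks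
   centered at I_(i_l) and I_(i_(l+1)) can only be the last minimum of the
   prefix sums strictly after i_l and up to i_(l+1), which gives (iii).  No
   proper rotation of P starts with a positive prefix, and no proper rotation
   of the blocks leaves P unchanged since the sets of P are distinct; this
   gives (iv) with s = l = 1. *)

Lemma take_size_cat_add (T : Type) j (s1 s2 : seq T) :
  take (size s1 + j) (s1 ++ s2) = s1 ++ take j s2.
Proof. by rewrite takeD take_size_cat // drop_size_cat. Qed.

Lemma flatten_nth_split (T : Type) (Qs : seq (seq T)) l : (l < size Qs)%N ->
  flatten Qs = flatten (take l Qs) ++ nth [::] Qs l ++ flatten (drop l.+1 Qs).
Proof. by move=> lt_l; rewrite -{1}(cat_take_drop l Qs) (drop_nth [::] lt_l) flatten_cat. Qed.

Lemma nth_flatten_offset (T : Type) (x0 : T) Qs l c :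
  (l < size Qs)%N -> (c < size (nth [::] Qs l))%N ->
  nth x0 (flatten Qs) (size (flatten (take l Qs)) + c) = nth x0 (nth [::] Qs l) c.
Proof.
move=> lt_l lt_c; rewrite (flatten_nth_split lt_l) nth_cat ltnNge leq_addr addKn /=.
by rewrite nth_cat lt_c.
Qed.

Lemma flatten_rot_id (T : eqType) (Qs : seq (seq T)) l :
  uniq (flatten Qs) -> [::] \notin Qs -> (l < size Qs)%N ->
  flatten (rot l Qs) = flatten Qs -> l = 0%N.
Proof.
move=> Qs_uniq Qs_ne lt_l; case: l lt_l => [//|l] lt_l.
have ne_in Q : Q \in Qs -> Q != [::] by apply: contraTneq => ->.
have take_ne : flatten (take l.+1 Qs) != [::].
  case: Qs Qs_ne lt_l ne_in {Qs_uniq} => [//|Q Qs] _ _ ne_in /=.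
  by case: Q ne_in => [/(_ _ (mem_head _ _))/eqP|].
have drop_ne : flatten (drop l.+1 Qs) != [::].
  by rewrite (drop_nth [::] lt_l) /=; case: (nth [::] Qs l.+1) (ne_in _ (mem_nth [::] lt_l)).
move: Qs_uniq; rewrite /rot -{1 4}(cat_take_drop l.+1 Qs) !flatten_cat.
case: (flatten (take l.+1 Qs)) take_ne => [//|a A] _.
case: (flatten (drop l.+1 Qs)) drop_ne => [//|b B] _ /= /andP[a_notin _].
by move=> /(congr1 (head a)) /= b_eq; move: a_notin; rewrite -b_eq mem_cat mem_head orbT.
Qed.

Section LastArgmin.
Variables (d : Order.disp_t) (T : orderType d) (f : nat -> T).
Local Open Scope order_scope.

Definition last_argmin lo hi m := [/\ (lo <= m <= hi)%N,
  forall j, (lo <= j < m)%N -> f m <= f j & forall j, (m < j <= hi)%N -> f m < f j].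

Lemma last_argmin_uniq lo hi m1 m2 :
  last_argmin lo hi m1 -> last_argmin lo hi m2 -> m1 = m2.
Proof.
move=> [m1_range le_m1 lt_m1] [m2_range le_m2 lt_m2].
case: (ltngtP m1 m2) => // [lt_m12|lt_m21].
  have lt_f12 : f m1 < f m2 by apply: lt_m1; lia.
  by move: lt_f12; rewrite ltNge le_m2 //; lia.
have lt_f21 : f m2 < f m1 by apply: lt_m2; lia.
by move: lt_f21; rewrite ltNge le_m1 //; lia.
Qed.

Lemma last_argmin_exists lo hi : (lo <= hi)%N -> exists m, last_argmin lo hi m.
Proof.
move=> /subnKC <-; elim: (hi - lo)%N => [|k [m [m_range le_m lt_m]]].
  by exists lo; split=> [|j|j]; lia.
case: (leP (f (lo + k.+1)%N) (f m)) => [le_new|lt_new].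
  exists (lo + k.+1)%N; split=> [|j j_range|j]; [lia | | lia].
  case: (ltngtP j m) => [lt_jm|lt_mj|->] //.
    by apply: le_trans le_new (le_m j _); lia.
  by apply: le_trans le_new (ltW (lt_m j _)); lia.
exists m; split=> [|//|j j_range]; first lia.
by case: (ltngtP j (lo + k.+1)) => [lt_j||->//]; [apply: lt_m|]; lia.
Qed.

End LastArgmin.

Section OrderedPartitions.
Variable n : nat.
Implicit Types (a b Q : seq {set 'I_n}) (I : {set 'I_n}).

Lemma opartE a : opart a <->
  [/\ forall I, I \in a -> I != set0, uniq a &
      forall A B, A \in a -> B \in a -> A != B -> [disjoint A & B]].
Proof.
split=> [[a_nz a_dis]|[a_nz a_uniq a_dis]]; last first.
  split=> // i j /andP[lt_ij lt_j]; have lt_i := ltn_trans lt_ij lt_j.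
  by apply: a_dis; rewrite ?mem_nth // nth_uniq // neq_ltn lt_ij.
have dis_nth i j : (i < size a)%N -> (j < size a)%N -> i != j ->
    [disjoint nth set0 a i & nth set0 a j].
  move=> lt_i lt_j; case: (ltngtP i j) => // lt_ij _.
    by apply: a_dis; rewrite lt_ij lt_j.
  by rewrite disjoint_sym; apply: a_dis; rewrite lt_ij lt_i.
split=> //.
  apply/(uniqP set0) => i j; rewrite !inE => lt_i lt_j eq_ij.
  apply/eqP/negPn/negP => /(dis_nth i j lt_i lt_j).
  by rewrite eq_ij -setI_eq0 setIid; apply/negP/a_nz/mem_nth.
move=> A B /(nthP set0)[i lt_i <-] /(nthP set0)[j lt_j <-] neqAB.
by apply: dis_nth => //; apply: contraNneq neqAB => ->.
Qed.

Lemma opart_uniq a : opart a -> uniq a.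
Proof. by case/opartE. Qed.

Lemma opart_cat a b : opart (a ++ b) -> opart a /\ opart b.
Proof.
case/opartE=> ab_nz; rewrite cat_uniq => /and3P[a_uniq _ b_uniq] ab_dis.
have sub_ab c : {subset c <= a ++ b} -> uniq c -> opart c.
  move=> sub_c c_uniq; apply/opartE; split=> // [I /sub_c|A B /sub_c A_ab /sub_c];
    [exact: ab_nz | exact: ab_dis].
by split; apply: sub_ab => // I memI; rewrite mem_cat memI ?orbT.
Qed.

Lemma opart_perm a b : perm_eq a b -> opart a -> opart b.
Proof.
move=> pab /opartE[a_nz a_uniq a_dis]; apply/opartE; split.
- by move=> I; rewrite -(perm_mem pab); apply: a_nz.
- by rewrite -(perm_uniq pab).
- by move=> A B; rewrite -!(perm_mem pab); apply: a_dis.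
Qed.

Lemma opart_flatten (Qs : seq (seq {set 'I_n})) Q :
  Q \in Qs -> opart (flatten Qs) -> opart Q.
Proof.
by case/splitPr: Qs / => Qs1 Qs2; rewrite flatten_cat => /opart_cat[_ /opart_cat[]].
Qed.

Lemma supp_cons I a : supp (I :: a) = I :|: supp a.
Proof. by rewrite /supp big_cons. Qed.

Lemma mem_supp a x : (x \in supp a) = has (fun I => x \in I) a.
Proof. by rewrite /supp bigcup_seq; apply/bigcupP/hasP => -[I]; exists I. Qed.

Lemma opart_cons I a : opart (I :: a) -> [/\ I != set0, [disjoint I & supp a] & opart a].
Proof.
move=> Ia_opart; have [_ a_opart] := opart_cat (a := [:: I]) Ia_opart.
case/opartE: Ia_opart => Ia_nz /= /andP[I_notin_a _] Ia_dis.
split=> //; first exact/Ia_nz/mem_head.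
apply/pred0P => x /=; apply/negP => /andP[xI]; rewrite mem_supp => /hasP[J Ja xJ].
have := Ia_dis I J (mem_head _ _); rewrite inE Ja orbT => /(_ isT).
have -> : I != J by apply: contraNneq I_notin_a => ->.
by move=> /(_ isT) /pred0P/(_ x); rewrite /= xI xJ.
Qed.

Definition opart_word a : seq 'I_n := flatten (map (fun B : {set 'I_n} => enum B) a).

Lemma mem_opart_word a x : (x \in opart_word a) = (x \in supp a).
Proof.
elim: a => [|I a IH]; first by rewrite mem_supp.
by rewrite /opart_word /= mem_cat mem_enum -/(opart_word a) IH supp_cons inE.
Qed.

Lemma opart_word_uniq a : opart a -> uniq (opart_word a).
Proof.
elim: a => [//|I a IH] /opart_cons[_ I_dis a_opart].
rewrite /opart_word /= cat_uniq enum_uniq -/(opart_word a) IH // andbT.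
apply/hasPn => x; rewrite mem_opart_word mem_enum => x_a; apply/negP => xI.
by move/pred0P: I_dis => /(_ x); rewrite /= xI x_a.
Qed.

Lemma opart_word_cat a b : opart_word (a ++ b) = opart_word a ++ opart_word b.
Proof. by rewrite /opart_word map_cat flatten_cat. Qed.

Lemma size_opart_word a : opart a -> size (opart_word a) = #|supp a|.
Proof.
move=> /opart_word_uniq/card_uniqP <-.
by apply: eq_card => x; rewrite mem_opart_word.
Qed.

End OrderedPartitions.



Section Sums.
Variables (R : realFieldType) (n : nat) (lam : 'I_n -> R).
Local Notation ssum := (ssum lam).
Local Notation sJ := (sJ lam).
Implicit Types (a b : seq {set 'I_n}) (I : {set 'I_n}).

Lemma ssum_cat a b : ssum (a ++ b) = ssum a + ssum b.
Proof. by rewrite /Defs.ssum big_cat. Qed.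

Lemma ssum_nil : ssum [::] = 0.
Proof. by rewrite /Defs.ssum big_nil. Qed.

Lemma ssum_take_drop j a : ssum a = ssum (take j a) + ssum (drop j a).
Proof. by rewrite -ssum_cat cat_take_drop. Qed.

Lemma sJ0 : sJ set0 = 0.
Proof. by rewrite /Defs.sJ big_set0. Qed.

Lemma ssum_supp a : opart a -> ssum a = sJ (supp a).
Proof.
elim: a => [|I a IH]; first by rewrite ssum_nil /supp big_nil sJ0.
move=> /opart_cons[_ I_dis /IH {}IH].
rewrite /Defs.ssum big_cons -/(ssum a) IH supp_cons /Defs.sJ -(bigU _ _ _ I_dis).
by apply: eq_bigl => x; rewrite !inE.
Qed.

End Sums.

Section WordSign.
Variables (R : realFieldType) (n : nat).
Implicit Types (w : seq 'I_n) (s t : {perm 'I_n}).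

Definition word_sign w : R :=
  match [pick s : {perm 'I_n} | [forall p, s p == nth p w p]] with
  | Some s => (-1) ^+ (odd_perm s)
  | None => 0
  end.

Lemma eps_word_sign P : eps R P = word_sign (opart_word P).
Proof. by []. Qed.

Lemma word_sign_reindex w w' t :
  (forall p, nth p w' p = nth (t p) w (t p)) -> word_sign w' = (-1) ^+ t * word_sign w.
Proof.
move=> w'_t; rewrite /word_sign.
case: pickP => [s' /forallP s'_w'|no_w']; case: pickP => [s /forallP s_w|no_w].
- have -> : s' = (t * s)%g.
    by apply/permP => p; rewrite permM (eqP (s_w _)) -w'_t (eqP (s'_w' _)).
  by rewrite odd_permM signr_addb.
- have /negbT/forallPn[p /eqP[]] := no_w (t^-1 * s')%g.
  by rewrite permM (eqP (s'_w' _)) w'_t permKV.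
- have /negbT/forallPn[p /eqP[]] := no_w' (t * s)%g.
  by rewrite permM (eqP (s_w _)) w'_t.
- by rewrite mulr0.
Qed.

Lemma word_sign_swap A D a b : ((size A).+1 < n)%N ->
  word_sign (A ++ b :: a :: D) = - word_sign (A ++ a :: b :: D).
Proof.
move=> lt_An; have lt_A := ltnW lt_An.
pose i0 := Ordinal lt_A; pose i1 := Ordinal lt_An.
have neq_i01 : i0 != i1 by rewrite -val_eqE /= neq_ltn ltnSn.
rewrite (word_sign_reindex (w := A ++ a :: b :: D) (t := tperm i0 i1)); last first.
  move=> p; case: tpermP => [->|->|/eqP neq_p0 /eqP neq_p1]; rewrite !nth_cat /=.
  - by rewrite ltnn ltnNge leqnSn subnn subSnn.
  - by rewrite ltnn ltnNge leqnSn subnn subSnn.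
  case: ltnP => // le_Ap.
  have : (2 <= p - size A)%N.
    by move: neq_p0 neq_p1; rewrite -!val_eqE /=; lia.
  by case: (p - size A)%N => [|[|k]].
by rewrite odd_tperm neq_i01 expr1 mulN1r.
Qed.

Lemma word_sign_move A X y D : (size (A ++ X ++ y :: D) <= n)%N ->
  word_sign (A ++ y :: X ++ D) = (-1) ^+ size X * word_sign (A ++ X ++ y :: D).
Proof.
elim: X A => [|x X IH] A le_n; first by rewrite mul1r.
rewrite word_sign_swap; last by move: le_n; rewrite !size_cat /=; lia.
have catAx B : A ++ x :: B = (A ++ [:: x]) ++ B by rewrite -catA.
rewrite catAx IH; last by move: le_n; rewrite !size_cat /=; lia.
by rewrite -catA exprS mulN1r mulNr.
Qed.

Lemma word_sign_swap_blocks A X Y D : (size (A ++ X ++ Y ++ D) <= n)%N ->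
  word_sign (A ++ Y ++ X ++ D) = (-1) ^+ (size X * size Y) * word_sign (A ++ X ++ Y ++ D).
Proof.
elim: Y A => [|y Y IH] A le_n; first by rewrite muln0 mul1r.
have catAy B : A ++ y :: B = (A ++ [:: y]) ++ B by rewrite -catA.
rewrite /= catAy IH; last by move: le_n; rewrite !size_cat /=; lia.
rewrite -catA /= word_sign_move; last by move: le_n; rewrite !size_cat /=; lia.
by rewrite mulrA -exprD mulnS addnC.
Qed.

End WordSign.

Section Blocks.
Variables (R : realFieldType) (n : nat) (lam : 'I_n -> R).
Local Notation ssum := (ssum lam).
Implicit Types (a b P Q X Y : seq {set 'I_n}) (c : R).

Lemma center_pos_suffix Q (c : nat) : center_pos lam Q c ->
  forall j, (c < j)%N -> ssum (drop j Q) <= 0.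
Proof.
case=> _ [_ Q_suf] j lt_cj; case: (ltnP j (size Q)) => [lt_jQ|le_Qj].
  by apply: Q_suf; rewrite lt_cj.
by rewrite drop_oversize // ssum_nil.
Qed.

Lemma block_nonempty Q : is_block lam Q -> (0 < size Q)%N.
Proof. by case=> _ [c [lt_cQ _]]; apply: leq_ltn_trans lt_cQ. Qed.

Lemma block_prefix_pos Q : is_block lam Q -> positive lam Q ->
  forall i, (1 <= i <= size Q)%N -> 0 < ssum (take i Q).
Proof.
case=> Q_opart [c c_center]; rewrite /positive -ssum_supp // => Q_pos i /andP[i_gt0 le_iQ].
case: (leqP i c) => [le_ic|lt_ci]; first by apply: c_center.2.1; rewrite i_gt0.
have := center_pos_suffix c_center lt_ci; rewrite (ssum_take_drop lam i Q) in Q_pos; lra.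
Qed.

Lemma block_suffix_nonpos Q : is_block lam Q -> negative lam Q ->
  forall i, (i < size Q)%N -> ssum (drop i Q) <= 0.
Proof.
case=> Q_opart [c c_center]; rewrite /negative /positive -ssum_supp // => /negP.
rewrite -leNgt => Q_neg [|i] lt_iQ; first by rewrite drop0.
case: (ltnP c i.+1) => [lt_ci|le_ic]; first exact: (center_pos_suffix c_center lt_ci).
have := c_center.2.1 i.+1 le_ic; rewrite (ssum_take_drop lam i.+1 Q) in Q_neg; lra.
Qed.

Definition pos_prefixes (c : R) P :=
  forall i, (1 <= i <= size P)%N -> 0 < c + ssum (take i P).

Lemma pos_prefixes0 P :
  pos_prefixes 0 P <-> forall i, (1 <= i <= size P)%N -> 0 < ssum (take i P).
Proof. by split=> P_pos i /P_pos; rewrite add0r. Qed.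

Lemma pos_prefixes_cat c a b :
  pos_prefixes c (a ++ b) <-> pos_prefixes c a /\ pos_prefixes (c + ssum a) b.
Proof.
split=> [ab_pos|[a_pos b_pos] i /andP[i_gt0]]; rewrite ?size_cat.
  split=> [i /andP[i_gt0 le_ia]|j /andP[j_gt0 le_jb]].
    by rewrite -(takel_cat b) //; apply: ab_pos; rewrite size_cat; lia.
  rewrite -addrA -ssum_cat -take_size_cat_add; apply: ab_pos; rewrite size_cat; lia.
case: (leqP i (size a)) => [le_ia _|lt_ai le_iab].
  by rewrite takel_cat //; apply: a_pos; rewrite i_gt0.
rewrite -(subnKC (ltnW lt_ai)) take_size_cat_add ssum_cat addrA.
apply: b_pos; lia.
Qed.

Lemma pos_prefixes_sum c a : 0 <= c -> pos_prefixes c a -> 0 <= c + ssum a.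
Proof.
case: a => [|I a] c_ge0 a_pos; first by rewrite ssum_nil addr0.
by have := a_pos (size (I :: a)); rewrite take_size leqnn => /(_ isT) /ltW.
Qed.

Lemma pos_prefixes_swap c X Y : 0 <= c -> is_block lam X -> is_block lam Y ->
  negative lam X \/ positive lam Y -> pos_prefixes c (X ++ Y) -> pos_prefixes c (Y ++ X).
Proof.
move=> c_ge0 X_block Y_block XY_sign /pos_prefixes_cat[X_pos Y_pos].
apply/pos_prefixes_cat; have Y_ne := block_nonempty Y_block.
case: XY_sign => [X_neg|Y_posv].
  have X_sum_le i : ssum X <= ssum (take i X).
    case: (ltnP i (size X)) => [lt_iX|le_Xi]; last by rewrite take_oversize.
    have := block_suffix_nonpos X_block X_neg lt_iX.
    by rewrite (ssum_take_drop lam i X); lra.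
  have := X_sum_le 0; rewrite take0 ssum_nil => X_sum_le0.
  have := Y_pos (size Y); rewrite Y_ne leqnn take_size => /(_ isT) XY_sum_pos.
  split=> i /andP[i_gt0 le_iY]; last by have := X_sum_le i; lra.
  by have := Y_pos i; rewrite i_gt0 le_iY => /(_ isT); lra.
have Y_sum_pos : 0 < ssum Y by rewrite ssum_supp //; case: Y_block.
split=> i i_range; last by have := X_pos i i_range; lra.
by have := block_prefix_pos Y_block Y_posv i_range; lra.
Qed.

Lemma swap_adjacent_blocks P Qs l :
  block_decomp lam P Qs -> (l.+1 < size Qs)%N -> Pord_lam lam P ->
  negative lam (nth [::] Qs l) \/ positive lam (nth [::] Qs l.+1) ->
  let P' := flatten (take l Qs ++ [:: nth [::] Qs l.+1; nth [::] Qs l] ++ drop l.+2 Qs) in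
  [/\ Pord_lam lam P', size P' = size P &
      eps R P' = (-1) ^+ (#|supp (nth [::] Qs l)| * #|supp (nth [::] Qs l.+1)|) * eps R P].
Proof.
move=> [Qs_block ->] lt_l [[P_opart P_supp] P_pos] XY_sign P'.
set X := nth [::] Qs l in XY_sign *; set Y := nth [::] Qs l.+1 in XY_sign *.
set A := flatten (take l Qs); set D := flatten (drop l.+2 Qs).
have eQs : flatten Qs = A ++ X ++ Y ++ D.
  by rewrite -{1}(cat_take_drop l Qs) (drop_nth [::] (ltnW lt_l)) (drop_nth [::] lt_l) flatten_cat.
have -> : P' = A ++ Y ++ X ++ D by rewrite /P' flatten_cat.
have X_block : is_block lam X by apply/Qs_block/mem_nth/ltnW.
have Y_block : is_block lam Y by apply/Qs_block/mem_nth.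
have perm_XY : perm_eq (A ++ X ++ Y ++ D) (A ++ Y ++ X ++ D) by rewrite perm_cat2l perm_catCA.
rewrite eQs in P_opart P_supp P_pos *.
split; last 2 first.
- by rewrite (perm_size perm_XY).
- have [_ /opart_cat[X_opart /opart_cat[Y_opart _]]] := opart_cat P_opart.
  rewrite !eps_word_sign !opart_word_cat word_sign_swap_blocks ?size_opart_word //.
  by rewrite -!opart_word_cat size_opart_word // P_supp cardsT card_ord.
split; first split.
- exact: opart_perm perm_XY P_opart.
- by rewrite -P_supp /supp (perm_big _ perm_XY).
have catAB3 B1 B2 : A ++ B1 ++ B2 ++ D = (A ++ (B1 ++ B2)) ++ D by rewrite !catA.
move/pos_prefixes0: P_pos; rewrite catAB3 => /pos_prefixes_cat[+ D_pos].
move=> /pos_prefixes_cat[A_pos XY_pos]; apply/pos_prefixes0.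
rewrite catAB3; apply/pos_prefixes_cat; split; last by rewrite !ssum_cat (addrC (ssum Y)) -!ssum_cat.
apply/pos_prefixes_cat; split=> //; apply: pos_prefixes_swap => //.
exact: pos_prefixes_sum.
Qed.

Lemma first_block_pos P Qs : Pord_lam lam P -> block_decomp lam P Qs ->
  (0 < size Qs)%N -> positive lam (nth [::] Qs 0).
Proof.
case: Qs => [//|Q Qs] [_ P_pos] [Qs_block P_eq] _ /=.
have Q_block : is_block lam Q by apply/Qs_block/mem_head.
rewrite /positive -ssum_supp; last by case: Q_block.
rewrite P_eq in P_pos; rewrite -(take_size_cat (flatten Qs) (erefl (size Q))).
by apply: P_pos; rewrite block_nonempty //= size_cat leq_addr.
Qed.

End Blocks.







Section CenteredDecomposition.
Variables (R : realFieldType) (n : nat) (lam : 'I_n -> R).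
Local Notation ssum := (ssum lam).
Implicit Types (P Q : seq {set 'I_n}) (Qs : seq (seq {set 'I_n})) (idx : seq nat).

(* Positions are counted in an ambient partition in which [P] starts at
   position [o], so that peeling off the first block only shifts [o]
   (lemma [centered_at_cons]) and leaves [idx] untouched. *)
Definition centered_at o P idx Qs := [/\ P = flatten Qs, size Qs = size idx &
  forall l, (l < size idx)%N ->
    (o + size (flatten (take l Qs)) <= nth 0 idx l)%N /\
    center_pos lam (nth [::] Qs l) (nth 0 idx l - (o + size (flatten (take l Qs))))%N].

Lemma centered_at_nil o P Qs : centered_at o P [::] Qs -> Qs = [::].
Proof. by case=> _ /size0nil. Qed.

Lemma centered_at_cons o P i idx Q Qs :
  centered_at o P (i :: idx) (Q :: Qs) <->
  [/\ P = Q ++ flatten Qs, (o <= i)%N, center_pos lam Q (i - o)%N &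
      centered_at (o + size Q)%N (flatten Qs) idx Qs].
Proof.
split=> [[-> [size_eq] Qs_center]|[-> le_oi Q_center [_ size_eq Qs_center]]].
  have [] := Qs_center 0%N isT; rewrite /= addn0 => le_oi Q_center.
  split=> //; split=> // l lt_l.
  by have := Qs_center l.+1 lt_l; rewrite /= size_cat addnA.
split=> //=; first by rewrite size_eq.
by case=> [|l] lt_l /=; rewrite ?addn0 // size_cat addnA; apply: Qs_center.
Qed.

Lemma centered_at_cut o P i i' idx Q Qs :
  centered_at o P (i :: i' :: idx) (Q :: Qs) ->
  last_argmin (fun j => ssum (take j P)) (i - o).+1 (i' - o)%N (size Q).
Proof.
case/centered_at_cons=> -> le_oi Q_center; case: Qs => [|Q' Qs]; first by case.
case/centered_at_cons=> -> le_oi' Q'_center _.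
have lt_iQ := Q_center.1; have lt_i'Q' := Q'_center.1.
split=> [|j j_range|j j_range]; first lia.
  rewrite take_size_cat // takel_cat; last lia.
  have Q_suf : ssum (drop j Q) <= 0 by apply: (center_pos_suffix Q_center); lia.
  by rewrite (ssum_take_drop lam j Q); lra.
rewrite take_size_cat // -(subnKC (ltnW (proj1 (andP j_range)))) take_size_cat_add ssum_cat.
rewrite takel_cat; last lia.
have Q'_pre : 0 < ssum (take (j - size Q) Q') by apply: Q'_center.2.1; lia.
lra.
Qed.

Lemma centered_at_uniq o P idx Qs1 Qs2 :
  centered_at o P idx Qs1 -> centered_at o P idx Qs2 -> Qs1 = Qs2.
Proof.
elim: idx o P Qs1 Qs2 => [|i idx IH] o P Qs1 Qs2 dec1 dec2.
  by rewrite (centered_at_nil dec1) (centered_at_nil dec2).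
case: Qs1 dec1 => [|Q1 Qs1] dec1; first by case: dec1.
case: Qs2 dec2 => [|Q2 Qs2] dec2; first by case: dec2.
have size_eq : size Q1 = size Q2.
  case: idx {IH} dec1 dec2 => [|i' idx] dec1 dec2.
    case/centered_at_cons: dec1 => P1 _ _ /centered_at_nil Qs1_nil.
    case/centered_at_cons: dec2 => P2 _ _ /centered_at_nil Qs2_nil.
    by move: P1 P2; rewrite Qs1_nil Qs2_nil /= !cats0 => <- <-.
  exact: last_argmin_uniq (centered_at_cut dec1) (centered_at_cut dec2).
case/centered_at_cons: dec1 => P1 _ _ dec1; case/centered_at_cons: dec2 => P2 _ _ dec2.
move/eqP: P2; rewrite P1 eqseq_cat // => /andP[/eqP Q_eq /eqP Qs_eq].
by rewrite Q_eq Qs_eq in dec1; rewrite Q_eq (IH _ _ _ _ dec1 dec2).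
Qed.

Lemma center_pos_take P c m : (c < m <= size P)%N ->
  (forall j, (0 < j <= c)%N -> 0 < ssum (take j P)) ->
  (forall j, (c < j < m)%N -> ssum (take m P) <= ssum (take j P)) ->
  center_pos lam (take m P) c.
Proof.
move=> m_range P_pre P_min; rewrite /center_pos size_takel; last lia.
split; first lia.
split=> j j_range; first by rewrite take_takel; [apply: P_pre | lia].
have := ssum_take_drop lam j (take m P); rewrite take_takel; last lia.
by have := P_min j j_range; lra.
Qed.

Lemma centered_at_exists o P i idx : sorted ltn (i :: idx) -> (o <= i)%N ->
  all (fun j => j < o + size P)%N (i :: idx) ->
  (forall j, (0 < j <= i - o)%N -> 0 < ssum (take j P)) ->
  (forall j, (last i idx - o < j)%N -> ssum (drop j P) <= 0) ->
  exists Qs, centered_at o P (i :: idx) Qs.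
Proof.
elim: idx o P i => [|i' idx IH] o P i i_sorted le_oi idx_lt P_pre /= P_suf.
  have lt_iP : (i < o + size P)%N by case/andP: idx_lt.
  exists [:: P]; apply/centered_at_cons; split; rewrite /= ?cats0 //.
  by split; [lia | split=> j j_range; [apply: P_pre | apply: P_suf]; lia].
case/andP: i_sorted => lt_ii' i'_sorted; have lt_i'P : (i' < o + size P)%N by case/and3P: idx_lt.
have lt_io : (i - o < i' - o)%N by lia.
have [m [m_range m_min m_lt]] := last_argmin_exists (fun j => ssum (take j P)) lt_io.
have [Qs dec] : exists Qs, centered_at (o + m) (drop m P) (i' :: idx) Qs.
  apply: IH => //; rewrite ?size_drop; first lia.
  - apply/allP => j j_in; have := allP idx_lt j; rewrite inE j_in orbT => /(_ isT).
    lia.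
  - move=> j j_range; have : ssum (take m P) < ssum (take (m + j) P) by apply: m_lt; lia.
    by rewrite takeD ssum_cat; lra.
  - by move=> j j_range; rewrite drop_drop; apply: P_suf; lia.
have drop_eq : drop m P = flatten Qs by case: dec.
exists (take m P :: Qs); apply/centered_at_cons; split=> //.
- by rewrite -drop_eq cat_take_drop.
- by apply: center_pos_take => //; lia.
- by rewrite size_takel -?drop_eq //; lia.
Qed.

Lemma centered_atP P idx Qs : opart P -> all (fun i => i < size P)%N idx ->
  centered_at 0 P idx Qs <->
  block_decomp lam P Qs /\ size Qs = size idx /\
  (forall l, (l < size idx)%N -> is_center lam (nth [::] Qs l) (nth set0 P (nth 0%N idx l))).
Proof.
move=> P_opart /all_nthP idx_lt; split=> [[P_eq size_eq Qs_center]|].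
  have Q_opart Q : Q \in Qs -> opart Q by move/opart_flatten; rewrite -P_eq; apply.
  split; [split=> // Q /(nthP [::])[l lt_l <-] | split=> // l lt_l].
    split; first exact/Q_opart/mem_nth.
    by exists (nth 0 idx l - size (flatten (take l Qs)))%N; case: (Qs_center l _); rewrite -?size_eq.
  have [le_off c_center] := Qs_center l lt_l.
  split; first by apply/Q_opart/mem_nth; rewrite size_eq.
  exists (nth 0 idx l - size (flatten (take l Qs)))%N; split=> //.
  by rewrite P_eq -nth_flatten_offset ?subnKC ?size_eq //; case: c_center.
move=> [[Qs_block P_eq] [size_eq Qs_center]]; split=> // l lt_l.
have lt_lQs : (l < size Qs)%N by rewrite size_eq.
have [_ [c [c_nth c_center]]] := Qs_center l lt_l; have lt_c := c_center.1.
have lt_off : (size (flatten (take l Qs)) + c < size P)%N.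
  by rewrite P_eq (flatten_nth_split lt_lQs) !size_cat; lia.
have off_eq : (size (flatten (take l Qs)) + c)%N = nth 0 idx l.
  apply/eqP; rewrite -(nth_uniq set0 lt_off (idx_lt 0%N _ lt_l) (opart_uniq P_opart)).
  by rewrite {1}P_eq nth_flatten_offset // c_nth.
by rewrite add0n -off_eq addKn leq_addr; split.
Qed.

End CenteredDecomposition.

Section MinimalRatio.
Variables (R : realFieldType) (n : nat) (lam : 'I_n -> R).
Local Notation sJ := (sJ lam).
Local Notation ssum := (ssum lam).
Local Notation ratio J := (sJ J / #|J|%:R).

Lemma delta_le J : 0 < sJ J -> delta lam <= ratio J.
Proof. exact: bigmin_le_cond. Qed.

Lemma Nlam_le J : 0 < sJ J -> ratio J = delta lam -> (Nlam lam <= #|J|)%N.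
Proof.
move=> J_pos J_min; have J_cond : (0 < sJ J) && (ratio J == delta lam).
  by rewrite J_pos J_min eqxx.
exact: (@bigmin_le_cond _ nat _ n J _ (fun K => #|K|) J_cond).
Qed.

Hypotheses (sJT_gt0 : 0 < sJ setT) (Nlam_n : Nlam lam = n).

Lemma delta_attained : exists2 J, 0 < sJ J & delta lam = ratio J.
Proof.
rewrite /delta; apply: (big_ind (fun x => exists2 J, 0 < sJ J & x = ratio J)).
- by exists setT; rewrite ?cardsT ?card_ord.
- by move=> x y [Jx Jx_pos ->] [Jy Jy_pos ->]; case: leP => _; [exists Jx | exists Jy].
- by move=> J J_pos; exists J.
Qed.

Lemma delta_argmin J : 0 < sJ J -> ratio J = delta lam -> J = setT.
Proof.
move=> J_pos J_min; apply/eqP; rewrite eqEcard subsetT cardsT card_ord -{1}Nlam_n.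
exact: Nlam_le.
Qed.

Lemma ratio_gt_mean J : 0 < sJ J -> J != setT -> sJ setT / n%:R < ratio J.
Proof.
move=> J_pos J_ne; have [J0 J0_pos delta_J0] := delta_attained.
have J0T : J0 = setT by apply: delta_argmin; rewrite -?delta_J0.
have -> : sJ setT / n%:R = ratio [set: 'I_n] by rewrite cardsT card_ord.
rewrite -J0T -delta_J0 lt_def delta_le // andbT.
by apply: contraNneq J_ne => /(delta_argmin J_pos) ->.
Qed.

(* A set J with 0 < s_J < s_[n] would leave a complement of positive sum; both
   ratios would then exceed the mean s_[n]/n, which is their weighted average. *)
Lemma sJ_setT_le J : 0 < sJ J -> sJ setT <= sJ J.
Proof.
move=> J_pos; rewrite leNgt; apply/negP => J_lt.
have sJTE : sJ setT = sJ J + sJ (~: J) by rewrite /Defs.sJ (big_setID J) setTI setTD.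
have JC_pos : 0 < sJ (~: J) by lra.
have nonempty K : 0 < sJ K -> (0 < #|K|)%N.
  by rewrite card_gt0; apply: contraTneq => ->; rewrite sJ0 ltxx.
have J_ne : J != setT by apply: contraTneq J_lt => ->; rewrite ltxx.
have JC_ne : ~: J != setT.
  by apply: contraTneq J_pos => JC_T; rewrite -[J]setCK JC_T setCT sJ0 ltxx.
have cardJC := cardsC J; rewrite card_ord in cardJC.
have n_gt0 : (0 < n)%N by rewrite -cardJC ltn_addr // nonempty.
have := ratio_gt_mean J_pos J_ne; have := ratio_gt_mean JC_pos JC_ne.
rewrite !ltr_pdivlMr ?ltr0n ?nonempty //; set mean := sJ setT / n%:R.
have : mean * n%:R = sJ J + sJ (~: J) by rewrite -sJTE mulfVK // pnatr_eq0 -lt0n.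
have -> : (n%:R : R) = #|J|%:R + #|~: J|%:R by rewrite -natrD cardJC.
rewrite mulrDr; lra.
Qed.

Lemma suffix_nonpos P j : Pord_lam lam P -> (0 < j)%N -> ssum (drop j P) <= 0.
Proof.
move=> [[P_opart P_supp] P_pos] j_gt0.
case: (leqP j (size P)) => [le_jP|lt_Pj]; last by rewrite drop_oversize ?ssum_nil // ltnW.
have [pre_opart _] : opart (take j P) /\ opart (drop j P).
  by apply: opart_cat; rewrite cat_take_drop.
have pre_pos : 0 < ssum (take j P) by apply: P_pos; rewrite j_gt0.
have := sJ_setT_le (J := supp (take j P)); rewrite -ssum_supp // => /(_ pre_pos).
by rewrite -P_supp -ssum_supp // (ssum_take_drop lam j P); lra.
Qed.

Lemma last_block_neg P Qs : Pord_lam lam P -> block_decomp lam P Qs ->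
  (1 < size Qs)%N -> negative lam (nth [::] Qs (size Qs).-1).
Proof.
case/lastP: Qs => [//|Qs Q] P_ord [Qs_block P_eq]; rewrite size_rcons nth_rcons ltnn eqxx /=.
case: Qs Qs_block P_eq => [//|Q1 Qs] Qs_block P_eq _.
have Q_block : is_block lam Q by apply: Qs_block; rewrite mem_rcons mem_head.
have Q1_ne : (0 < size Q1)%N by apply/block_nonempty/Qs_block; rewrite rcons_cons inE eqxx.
rewrite /negative /positive -ssum_supp; last by case: Q_block.
have := suffix_nonpos (j := size (flatten (Q1 :: Qs))) P_ord.
rewrite P_eq -cats1 flatten_cat /= cats0 drop_size_cat // size_cat => /(_ (ltn_addr _ Q1_ne)).
by rewrite leNgt => /negP.
Qed.

Lemma Pord_lam_size_gt0 P : Pord_lam lam P -> (0 < size P)%N.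
Proof.
by case: P => [|//] [[_ supp_nil] _]; move: sJT_gt0; rewrite -supp_nil /supp big_nil sJ0 ltxx.
Qed.

Lemma Pord_lam_rot P s : Pord_lam lam P -> (s < size P)%N -> Pord_lam lam (rot s P) -> s = 0%N.
Proof.
move=> P_ord lt_sP [_ rot_pos]; apply/eqP; rewrite -leqn0 leqNgt; apply/negP => s_gt0.
have := rot_pos (size P - s)%N; rewrite size_rot /rot take_size_cat ?size_drop //.
have := suffix_nonpos P_ord s_gt0; rewrite ltNge => -> /(_ _); lia.
Qed.

Lemma centered_at_exists_unique P idx : Pord_lam lam P -> (0 < size idx)%N ->
  sorted ltn idx -> all (fun i => i < size P)%N idx ->
  exists! Qs, centered_at lam 0 P idx Qs.
Proof.
case: idx => [//|i idx] P_ord _ idx_sorted idx_lt.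
have lt_iP : (i < size P)%N by case/andP: idx_lt.
have [Qs dec] : exists Qs, centered_at lam 0 P (i :: idx) Qs.
  apply: centered_at_exists => // [j|j]; rewrite subn0 => j_range.
    by apply: P_ord.2; lia.
  by apply: (suffix_nonpos P_ord); lia.
by exists Qs; split=> // Qs'; apply: centered_at_uniq.
Qed.

Lemma Pord_lam_rot_exists_unique P :
  Pord_lam lam P -> exists! s, (s < size P)%N /\ Pord_lam lam (rot s P).
Proof.
move=> P_ord; exists 0%N; split=> [|s [lt_sP /(Pord_lam_rot P_ord lt_sP) ->] //].
by rewrite rot0 Pord_lam_size_gt0.
Qed.

Lemma block_decomp_rot_exists_unique P Qs : Pord_lam lam P -> block_decomp lam P Qs ->
  exists! l, (l < size Qs)%N /\ P = flatten (rot l Qs).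
Proof.
move=> P_ord [Qs_block P_eq]; exists 0%N; split=> [|l [lt_l]].
  rewrite rot0 -P_eq; split=> //.
  by case: Qs P_eq {Qs_block} => [P_nil|//]; have := Pord_lam_size_gt0 P_ord; rewrite P_nil.
rewrite {1}P_eq => /esym rot_eq; apply/esym/(flatten_rot_id _ _ lt_l rot_eq).
  by rewrite -P_eq; apply: opart_uniq P_ord.1.1.
by apply/negP => /Qs_block/block_nonempty.
Qed.

End MinimalRatio.


Theorem mainTheorem15 (R : realFieldType) (n : nat) (lam : 'I_n -> R) :
  (* (i) *)
  (forall Q : seq {set 'I_n}, is_block lam Q ->
     (positive lam Q -> forall i, (1 <= i <= size Q)%N -> 0 < ssum lam (take i Q)) /\
     (negative lam Q -> forall i, (i < size Q)%N -> ssum lam (drop i Q) <= 0)) /\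
  (* (ii) *)
  (forall (P : seq {set 'I_n}) (Qs : seq (seq {set 'I_n})) (l : nat),
     Pord P -> block_decomp lam P Qs -> (l.+1 < size Qs)%N ->
     Pord_lam lam P ->
     negative lam (nth [::] Qs l) \/ positive lam (nth [::] Qs l.+1) ->
     let P' := flatten (take l Qs ++ [:: nth [::] Qs l.+1; nth [::] Qs l] ++ drop l.+2 Qs) in
     [/\ Pord_lam lam P', size P' = size P &
         eps R P' = (-1) ^+ (#|supp (nth [::] Qs l)| * #|supp (nth [::] Qs l.+1)|) * eps R P]) /\
  (0 < sJ lam setT -> Nlam lam = n ->
   (* (iii) *)
   (forall (P : seq {set 'I_n}) (idx : seq nat),
      Pord_lam lam P -> (1 <= size idx <= size P)%N -> sorted ltn idx ->
      all (fun i => i < size P)%N idx ->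
      let D := fun Qs : seq (seq {set 'I_n}) =>
        block_decomp lam P Qs /\ size Qs = size idx /\
        (forall l, (l < size idx)%N ->
           is_center lam (nth [::] Qs l) (nth set0 P (nth 0%N idx l))) in
      (exists! Qs, D Qs) /\
      (forall Qs, D Qs -> positive lam (nth [::] Qs 0) /\
         ((2 <= size idx)%N -> negative lam (nth [::] Qs (size idx).-1)))) /\
   (* (iv) *)
   (forall (P : seq {set 'I_n}) (Qs : seq (seq {set 'I_n})),
      Pord_lam lam P -> block_decomp lam P Qs ->
      (exists! s, (s < size P)%N /\ Pord_lam lam (rot s P)) /\
      (forall s, (s < size P)%N -> Pord_lam lam (rot s P) ->
         exists! l, (l < size Qs)%N /\ rot s P = flatten (rot l Qs)))).
Proof.
split; first by move=> Q Q_block; split; [exact: block_prefix_pos | exact: block_suffix_nonpos].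
split; first by move=> P Qs l _; apply: swap_adjacent_blocks.
move=> sJT_gt0 Nlam_n; split=> [P idx P_ord /andP[idx_gt0 _] idx_sorted idx_lt D|P Qs P_ord P_dec].
  have D_iff Qs : D Qs <-> centered_at lam 0 P idx Qs.
    by apply: iff_sym; apply: centered_atP P_ord.1.1 idx_lt.
  split=> [|Qs [Qs_dec [size_eq _]]].
    have [Qs [dec dec_uniq]] := centered_at_exists_unique sJT_gt0 Nlam_n P_ord idx_gt0 idx_sorted idx_lt.
    by exists Qs; split=> [|Qs' /D_iff/dec_uniq //]; apply/D_iff.
  rewrite -size_eq; split=> [|le2]; first by apply: (first_block_pos P_ord Qs_dec); rewrite size_eq.
  exact: (last_block_neg sJT_gt0 Nlam_n P_ord Qs_dec).
split; first exact: (Pord_lam_rot_exists_unique sJT_gt0 Nlam_n).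
move=> s lt_sP /(Pord_lam_rot sJT_gt0 Nlam_n P_ord lt_sP) ->; rewrite rot0.
exact: (block_decomp_rot_exists_unique sJT_gt0 P_ord).
Qed.
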